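(* Let $R$ and $R'$ be (not necessarily commutative) subrings of a $\mathbb Q$-algebra, let $\Gamma$ be an order of a number field, let $d\ge1$ be an integer and $\Gamma'=\mathbb Z[d\Gamma]$. Suppose $dR\subseteq R'$ and $R'\subseteq R$. Then the number of $\Gamma$-structures on $R$ is at most the number of $\Gamma'$-structures on $R'$.
   Context: For rings $A,B$, $\operatorname{Hom}(A,B)$ is the set of ring morphisms $A\to B$, with $B^\times$ acting by conjugation; an $A$-structure on $B$ is an element of $\operatorname{Hom}(A,B)/B^\times$. *)

From HB Require Import structures.
From mathcomp Require Import all_boot all_order all_algebra all_field.
Set Implicit Arguments. Unset Strict Implicit. Unset Printing Implicit Defensive.
Import Order.TTheory GRing.Theory Num.Theory.
Local Open Scope ring_scope.

Definition is_subring (T : nzRingType) (S : T -> Prop) : Prop :=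
  S 1 /\ (forall x y, S x -> S y -> S (x - y)) /\ (forall x y, S x -> S y -> S (x * y)).

Definition is_order (L : fieldExtType rat) (G : L -> Prop) : Prop :=
  [/\ is_subring G,
      (exists s : seq L, forall x, G x <->
          exists z : 'I_(size s) -> int, x = \sum_(i < size s) (z i)%:~R * s`_i)
    & (exists s : seq L, (forall x, x \in s -> G x) /\ <<s>>%VS = fullv)].

Definition Zgen (L : fieldExtType rat) (d : nat) (G : L -> Prop) : L -> Prop :=
  fun x => forall S : L -> Prop, is_subring S ->
             (forall g, G g -> S (d%:R * g)) -> S x.

(* f : L -> A restricts to a ring morphism G -> R (only values on G matter). *)
Definition is_hom (L : fieldExtType rat) (A : algType rat)
    (G : L -> Prop) (R : A -> Prop) (f : L -> A) : Prop :=
  [/\ forall x, G x -> R (f x),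
      f 1 = 1,
      forall x y, G x -> G y -> f (x + y) = f x + f y
    & forall x y, G x -> G y -> f (x * y) = f x * f y].

Definition conj_rel (L : fieldExtType rat) (A : algType rat)
    (G : L -> Prop) (R : A -> Prop) (f g : L -> A) : Prop :=
  exists u v : A, [/\ R u, R v, u * v = 1, v * u = 1 &
                      forall x, G x -> g x = u * f x * v].

(* Hom(G, R) / R^x : the type of G-structures on R, as equivalence classes. *)
Definition structures (L : fieldExtType rat) (A : algType rat)
    (G : L -> Prop) (R : A -> Prop) : Type :=
  { C : (L -> A) -> Prop |
    exists f, is_hom G R f /\ C = (fun g => is_hom G R g /\ conj_rel G R f g) }.

From HB Require Import structures.
From mathcomp Require Import all_boot all_order all_algebra all_field.
From Stdlib Require Import ClassicalEpsilon ProofIrrelevance PropExtensionality FunctionalExtensionality.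
Set Implicit Arguments. Unset Strict Implicit.
Import GRing.Theory Num.Theory.
Local Open Scope ring_scope.

(* Restriction to Gamma' = Z[d Gamma] sends a morphism f : Gamma -> R to a morphism
   Gamma' -> R', since f(d g) = d f(g) lies in dR, which is contained in R', and
   Gamma' is generated by d Gamma.  If the restrictions of f and g are conjugate
   by a unit u of R' (hence of R), then d g(x) = g(d x) = u f(d x) u^-1 = d u f(x) u^-1
   for x in Gamma, and d is invertible in the Q-algebra, so f and g are already
   conjugate.  Hence restriction descends to an injection on conjugacy classes. *)

Section Subring.
Variables (T : nzRingType) (S : T -> Prop).
Hypothesis subS : is_subring S.

Lemma subring0 : S 0.
Proof. by case: subS => S1 [SB _]; rewrite -(subrr 1); apply: SB. Qed.

Lemma subringN x : S x -> S (- x).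
Proof. by case: subS => _ [SB _] Sx; rewrite -sub0r; apply: SB => //; apply: subring0. Qed.

Lemma subringD x y : S x -> S y -> S (x + y).
Proof.
by case: subS => _ [SB _] Sx Sy; rewrite -(opprK y); apply: SB => //; apply: subringN.
Qed.

Lemma subringMn x n : S x -> S (x *+ n).
Proof.
move=> Sx; elim: n => [|n IHn]; first by rewrite mulr0n; apply: subring0.
by rewrite mulrS; apply: subringD.
Qed.

End Subring.

Lemma mulrnI_algQ (A : algType rat) (n : nat) (a b : A) :
  (0 < n)%N -> a *+ n = b *+ n -> a = b.
Proof.
move=> n_gt0 /eqP; rewrite -subr_eq0 -mulrnBl -scaler_nat scaler_eq0.
by rewrite pnatr_eq0 gtn_eqF // subr_eq0 => /eqP.
Qed.

Section Morphisms.
Variables (L : fieldExtType rat) (A : algType rat).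

Section Hom.
Variables (G : L -> Prop) (R : A -> Prop) (f : L -> A).
Hypotheses (subG : is_subring G) (homf : is_hom G R f).

Lemma is_hom0 : f 0 = 0.
Proof.
case: homf => _ _ fD _; have G0 := subring0 subG.
by apply: (@addrI _ (f 0)); rewrite -fD // !addr0.
Qed.

Lemma is_homN x : G x -> f (- x) = - f x.
Proof.
case: homf => _ _ fD _ Gx; apply: (@addrI _ (f x)).
by rewrite -fD ?subrr ?is_hom0 //; apply: subringN.
Qed.

Lemma is_homB x y : G x -> G y -> f (x - y) = f x - f y.
Proof.
case: homf => _ _ fD _ Gx Gy.
by rewrite fD ?is_homN //; apply: subringN.
Qed.

Lemma is_homMn x n : G x -> f (x *+ n) = f x *+ n.
Proof.
case: homf => _ _ fD _ Gx; elim: n => [|n IHn]; first by rewrite !mulr0n is_hom0.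
by rewrite !mulrS fD ?IHn //; apply: subringMn.
Qed.

End Hom.

Section Conjugacy.
Variables (G : L -> Prop) (R : A -> Prop).
Hypothesis subR : is_subring R.

Lemma conj_rel_refl f : conj_rel G R f f.
Proof.
case: subR => R1 _; exists 1, 1; split; rewrite ?mulr1 //.
by move=> x _; rewrite mul1r mulr1.
Qed.

Lemma conj_rel_sym f g : conj_rel G R f g -> conj_rel G R g f.
Proof.
move=> [u [v [Ru Rv uv vu fg]]]; exists v, u; split=> // x Gx.
by rewrite fg // !mulrA vu mul1r -mulrA vu mulr1.
Qed.

Lemma conj_rel_trans f g h : conj_rel G R f g -> conj_rel G R g h -> conj_rel G R f h.
Proof.
case: subR => _ [_ RM] [u [v [Ru Rv uv vu fg]]] [w [w' [Rw Rw' ww' w'w gh]]].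
exists (w * u), (v * w'); split; try exact: RM.
- by rewrite mulrA -(mulrA w) uv mulr1.
- by rewrite mulrA -(mulrA v) w'w mulr1.
- by move=> x Gx; rewrite gh // fg // !mulrA.
Qed.

End Conjugacy.

Definition hom_class (G : L -> Prop) (R : A -> Prop) (f : L -> A) : (L -> A) -> Prop :=
  fun g => is_hom G R g /\ conj_rel G R f g.

Lemma hom_class_conj (G : L -> Prop) (R : A -> Prop) f g :
  is_subring R -> conj_rel G R f g -> hom_class G R f = hom_class G R g.
Proof.
move=> subR fg; apply: functional_extensionality => h.
apply: propositional_extensionality; split=> -[homh ch]; split=> //.
  exact: conj_rel_trans (conj_rel_sym fg) ch.
exact: conj_rel_trans fg ch.
Qed.

(* Restriction is the identity on underlying functions, as [is_hom] and
   [conj_rel] only look at values on the domain. *)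
Lemma structures_injection (G G' : L -> Prop) (R R' : A -> Prop) :
  is_subring R -> is_subring R' ->
  (forall f, is_hom G R f -> is_hom G' R' f) ->
  (forall f g, is_hom G R f -> is_hom G R g -> conj_rel G' R' f g -> conj_rel G R f g) ->
  exists F : structures G R -> structures G' R', injective F.
Proof.
move=> subR subR' homG' conjG.
have rep (C : structures G R) : {f | is_hom G R f /\ sval C = hom_class G R f}.
  exact: constructive_indefinite_description (svalP C).
pose F C := exist (fun C' => exists f, is_hom G' R' f /\ C' = hom_class G' R' f)
  (hom_class G' R' (sval (rep C)))
  (ex_intro _ (sval (rep C)) (conj (homG' _ (proj1 (svalP (rep C)))) erefl)).
exists F => C1 C2 /(f_equal (fun C => sval C (sval (rep C2)))) /= F12.
case: (rep C1) F12 => f1 [homf1 C1f1]; case: (rep C2) => f2 [homf2 C2f2] /= F12.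
have [_ conj12] : hom_class G' R' f1 f2.
  by rewrite F12; split; [exact: homG' homf2 | exact: conj_rel_refl].
move: C1 C2 C1f1 C2f2 => [C1 hC1] [C2 hC2] /= C1f1 C2f2.
apply: ProofIrrelevanceTheory.subset_eq_compat.
by rewrite C1f1 C2f2; apply/hom_class_conj/conjG.
Qed.

Lemma Zgen_sub (d : nat) (G : L -> Prop) x : is_subring G -> Zgen d G x -> G x.
Proof.
move=> subG; apply=> // g Gg; have [G1 [_ GM]] := subG.
by apply: GM => //; apply: subringMn.
Qed.

Lemma Zgen_natrM (d : nat) (G : L -> Prop) x : G x -> Zgen d G (d%:R * x).
Proof. by move=> Gx S _; apply. Qed.

Lemma is_hom_Zgen (d : nat) (G : L -> Prop) (R R' : A -> Prop) f :
  is_subring G -> is_subring R' -> (forall x, R x -> R' (d%:R * x)) ->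
  is_hom G R f -> is_hom (Zgen d G) R' f.
Proof.
move=> subG subR' dRR' homf; have [fR f1 fD fM] := homf.
have subGR' : is_subring (fun y => G y /\ R' (f y)).
  case: (subG) => G1 [GB GM]; case: (subR') => R'1 [R'B R'M].
  split; [|split] => [|x y [Gx R'x] [Gy R'y]|x y [Gx R'x] [Gy R'y]].
  - by rewrite f1.
  - by rewrite (is_homB subG homf) //; split; [apply: GB | apply: R'B].
  - by rewrite fM //; split; [apply: GM | apply: R'M].
have dG_subGR' g : G g -> G (d%:R * g) /\ R' (f (d%:R * g)).
  move=> Gg; rewrite mulr_natl; split; first exact: subringMn.
  by rewrite (is_homMn subG homf) // -mulr_natl; apply/dRR'/fR.
split=> // [x /(_ _ subGR' dG_subGR') []//|x y|x y] /(Zgen_sub subG) Gx /(Zgen_sub subG) Gy.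
- exact: fD.
- exact: fM.
Qed.

Lemma conj_rel_Zgen (d : nat) (G : L -> Prop) (R R' : A -> Prop) f g :
  (0 < d)%N -> is_subring G -> (forall x, R' x -> R x) ->
  is_hom G R f -> is_hom G R g ->
  conj_rel (Zgen d G) R' f g -> conj_rel G R f g.
Proof.
move=> d_gt0 subG R'R homf homg [u [v [R'u R'v uv vu fg]]].
exists u, v; split=> [||||x Gx]; [exact: R'R R'u | exact: R'R R'v | done | done |].
apply: (mulrnI_algQ d_gt0).
have := fg _ (Zgen_natrM (d := d) Gx).
by rewrite mulr_natl (is_homMn subG homf) // (is_homMn subG homg) // mulrnAr mulrnAl.
Qed.

End Morphisms.

Theorem lemma10p10 (A : algType rat) (L : fieldExtType rat)
    (R R' : A -> Prop) (G : L -> Prop) (d : nat) :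
  is_subring R -> is_subring R' -> is_order G -> (0 < d)%N ->
  (forall x, R x -> R' (d%:R * x)) ->
  (forall x, R' x -> R x) ->
  exists F : structures G R -> structures (Zgen d G) R', injective F.
Proof.
move=> subR subR' [subG _ _] d_gt0 dRR' R'R.
apply: structures_injection => // [f homf|f g homf homg].
  exact: is_hom_Zgen subG subR' dRR' homf.
exact: conj_rel_Zgen d_gt0 subG R'R homf homg.
Qed.
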